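(* Let $Y$ be a Young diagram. For any 2-cover $P$ of $H(Y)$ there exists a 2-cover $P'$ of $H(Y)$ such that $|P'|=|P|$ and $P'\cap(C\times S)$ is closed down.
   Context: For $Y$ with row lengths $a_1\ge\cdots\ge a_m\ge0$, $H(Y)$ has vertex sides $R=\{r_1,\dots,r_m\}$, $C=\{c_1,\dots,c_{a_1}\}$, $S=\{s_1,\dots,s_{a_1}\}$ and edges $\{r_i,c_j,s_k\}$ for $1\le i\le m$, $1\le j,k\le a_i$. A 2-cover of $H(Y)$ is a set of 2-element vertex sets such that every edge contains a member of it. $C\times S$ is the set of pairs $c_js_k$. A set $\Gamma\subseteq C\times S$ is closed down if $c_ps_q\in\Gamma$ implies $c_{p'}s_{q'}\in\Gamma$ for all $p'\le p$, $q'\le q$. *)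

From mathcomp Require Import all_boot.
Set Implicit Arguments. Unset Strict Implicit. Unset Printing Implicit Defensive.

(* A Young diagram is given by its row lengths a = [:: a_1; ...; a_m],
   weakly decreasing. Indices are 0-based: row i (i < m) has length nth 0 a i. *)
Definition young (a : seq nat) : bool := sorted geq a.

Definition nrows (a : seq nat) : nat := size a.
Definition ncols (a : seq nat) : nat := head 0 a.

Definition vtx (a : seq nat) : finType :=
  ('I_(nrows a) + ('I_(ncols a) + 'I_(ncols a)))%type.

Definition rv (a : seq nat) (i : 'I_(nrows a)) : vtx a := inl i.
Definition cv (a : seq nat) (j : 'I_(ncols a)) : vtx a := inr (inl j).
Definition sv (a : seq nat) (k : 'I_(ncols a)) : vtx a := inr (inr k).

(* The edge {r_i, c_j, s_k}, an edge of H(Y) iff j, k < a_i (0-based). *)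
Definition hedge (a : seq nat) (i : 'I_(nrows a)) (j k : 'I_(ncols a))
  : {set vtx a} := [set rv i; cv j; sv k].

Definition two_cover (a : seq nat) (P : {set {set vtx a}}) : Prop :=
  (forall e, e \in P -> #|e| = 2) /\
  (forall (i : 'I_(nrows a)) (j k : 'I_(ncols a)),
      j < nth 0 a i -> k < nth 0 a i ->
      exists2 e, e \in P & e \subset hedge i j k).

Definition cs_pair (a : seq nat) (j k : 'I_(ncols a)) : {set vtx a} :=
  [set cv j; sv k].

Definition CS_part (a : seq nat) (P : {set {set vtx a}}) : {set {set vtx a}} :=
  [set e in P | [exists j, exists k, e == cs_pair j k]].

Definition closed_down (a : seq nat) (G : {set {set vtx a}}) : Prop :=
  forall p q p' q' : 'I_(ncols a),
    cs_pair p q \in G -> p' <= p -> q' <= q -> cs_pair p' q' \in G.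

From mathcomp Require Import all_boot all_fingroup zify.
Set Implicit Arguments. Unset Strict Implicit. Unset Printing Implicit Defensive.

(* For every vertex v outside C fix a permutation of the columns and
   apply it to the C-end of every pair {c_j, v} of P; this is a bijection on
   2-sets, so |P| is kept.  For v = s_k the C-neighbours of s_k are sent onto an
   initial segment of columns, and for v = r_i the C-neighbours of r_i inside
   row i onto the last columns of row i.  The cover property survives: if the
   edge r_i c_j s_k is not covered by r_i s_k, every column j' < a_i is a
   neighbour of r_i or of s_k, so the two segments together fill row i and one
   of them contains j.  Afterwards {j | c_j s_k in P} is an initial segment of
   length |N_C(s_k)|, i.e. P ∩ (C × S) is closed down in the C coordinate.
   Exchanging C and S and shifting again closes it down in the other
   coordinate as well, and the first closure survives because N_C(s_k) then
   shrinks as k grows. *)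

Section PermOnto.
Variable T : finType.
Implicit Types A B : {set T}.

Lemma exists_perm_imset A B : #|A| = #|B| -> exists s : {perm T}, s @: A = B.
Proof.
move eqk: #|A :\: B| => k; elim: k A eqk => [|k IH] A cardAB cardA.
  exists 1%g; rewrite imset_perm1; apply/eqP; rewrite eqEcard cardA leqnn andbT.
  by rewrite -setD_eq0 -cards_eq0 cardAB.
have cardBA : #|B :\: A| = k.+1.
  by move: (cardsID B A) (cardsID A B); rewrite setIC cardA cardAB; lia.
have /set0Pn[x] : A :\: B != set0 by rewrite -card_gt0 cardAB.
have /set0Pn[y] : B :\: A != set0 by rewrite -card_gt0 cardBA.
rewrite !inE => /andP[yA yB] /andP[xB xA].
pose A' := tperm x y @: A.
have memA' z : (z \in A') = (tperm x y z \in A).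
  by rewrite -{1}(tpermK x y z) mem_imset //; apply: perm_inj.
have A'B : A' :\: B = (A :\: B) :\ x.
  apply/setP => z; rewrite !inE memA'.
  case: tpermP => [->|->|/eqP zx _]; first by rewrite eqxx (negbTE yA) andbF.
    by rewrite yB andbF.
  by rewrite zx.
have [s sA'] : exists s : {perm T}, s @: A' = B.
  apply: IH; last by rewrite card_imset //; apply: perm_inj.
  by move: (cardsD1 x (A :\: B)); rewrite -A'B cardAB !inE xA xB; lia.
exists (tperm x y * s)%g; rewrite -sA' -imset_comp.
by apply: eq_imset => z; rewrite permM.
Qed.

Definition perm_onto A B : {perm T} := odflt 1%g [pick s : {perm T} | s @: A == B].

Lemma perm_ontoE A B : #|A| = #|B| -> perm_onto A B @: A = B.
Proof.
rewrite /perm_onto; case: pickP => [s /eqP //|noperm /exists_perm_imset[s sA]].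
by move: (noperm s); rewrite sA eqxx.
Qed.

Lemma mem_perm_onto A B x : #|A| = #|B| -> (x \in B) = ((perm_onto A B)^-1%g x \in A).
Proof.
move/perm_ontoE=> {1}<-; rewrite -{1}(permKV (perm_onto A B) x) mem_imset //.
exact: perm_inj.
Qed.

End PermOnto.

Lemma card2_subset_set3 (T : finType) (e : {set T}) x y z :
  #|e| = 2 -> e \subset [set x; y; z] ->
  [\/ e = [set x; y], e = [set x; z] | e = [set y; z]].
Proof.
move/eqP/cards2P=> [u [w [uw ->]]] /subsetP sub_e.
have := sub_e u (set21 u w); have := sub_e w (set22 u w).
rewrite !inE -!orbA => /or3P[]/eqP wE /or3P[]/eqP uE; subst u w;
  rewrite ?eqxx // in uw;
  by [apply: Or31 | apply: Or32 | apply: Or33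
     | apply: Or31; rewrite setUC | apply: Or32; rewrite setUC | apply: Or33; rewrite setUC].
Qed.

Section Relabel.
Variable a : seq nat.
Local Notation n := (ncols a).
Local Notation V := (vtx a).

Definition is_col (x : V) : bool := if x is inr (inl _) then true else false.
Definition noncols (e : {set V}) : {set V} := [set x in e | ~~ is_col x].

Variable pi : V -> {perm 'I_n}.

Definition relabel_col (s : {perm 'I_n}) (x : V) : V :=
  if x is inr (inl j) then cv (s j) else x.

(* On 2-sets, [noncols e = [set v]] singles out the pairs {c_j, v} with v
   outside C. *)
Definition relabel (e : {set V}) : {set V} :=
  if [pick v | noncols e == [set v]] is Some v then relabel_col (pi v) @: e else e.

Lemma relabel_col_inj s : injective (relabel_col s).
Proof. by move=> [x|[x|x]] [y|[y|y]] //= [] // /perm_inj->. Qed.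

Lemma relabel_col_id s x : ~~ is_col x -> relabel_col s x = x.
Proof. by case: x => [x|[x|x]]. Qed.

Lemma noncols_relabel_col s (e : {set V}) : noncols (relabel_col s @: e) = noncols e.
Proof.
have is_col_relabel x : is_col (relabel_col s x) = is_col x by case: x => [x|[x|x]].
apply/setP => x; rewrite !inE; apply/andP/andP => [[/imsetP[y ye ->]]|[xe xC]].
  by rewrite is_col_relabel => yC; rewrite relabel_col_id.
by split; rewrite // -(relabel_col_id s xC) imset_f.
Qed.

Lemma noncols_relabel e : noncols (relabel e) = noncols e.
Proof. by rewrite /relabel; case: pickP => // v _; rewrite noncols_relabel_col. Qed.

Lemma relabel_inj : injective relabel.
Proof.
move=> e1 e2 eq12; have eqN : noncols e1 = noncols e2.
  by rewrite -noncols_relabel eq12 noncols_relabel.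
move: eq12; rewrite /relabel eqN; case: pickP => // v _.
exact/imset_inj/relabel_col_inj.
Qed.

Lemma card_relabel e : #|relabel e| = #|e|.
Proof.
by rewrite /relabel; case: pickP => // v _; rewrite card_imset //; apply: relabel_col_inj.
Qed.

Lemma relabel_id e : (forall v, noncols e != [set v]) -> relabel e = e.
Proof.
by move=> e_not1; rewrite /relabel; case: pickP => // v; rewrite (negbTE (e_not1 v)).
Qed.

Lemma relabel_pair v j : ~~ is_col v -> relabel [set cv j; v] = [set cv (pi v j); v].
Proof.
move=> vC; have noncols_jv : noncols [set cv j; v] = [set v].
  apply/setP => x; rewrite !inE; case: eqP => [->|_] /=.
    by apply/esym/eqP => jv; move: vC; rewrite -jv.
  by case: eqP => // ->; rewrite vC.
rewrite /relabel noncols_jv.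
case: pickP => [w /eqP/set1_inj <-|/(_ v)]; last by rewrite eqxx.
by rewrite imsetU1 imset_set1 (relabel_col_id _ vC).
Qed.

Lemma mem_relabel_pair (P : {set {set V}}) v j : ~~ is_col v ->
  ([set cv (pi v j); v] \in relabel @: P) = ([set cv j; v] \in P).
Proof. by move=> vC; rewrite -relabel_pair // mem_imset //; apply: relabel_inj. Qed.

End Relabel.

Definition closed_downC (a : seq nat) (P : {set {set vtx a}}) : Prop :=
  forall j j' k : 'I_(ncols a), cs_pair j k \in P -> j' <= j -> cs_pair j' k \in P.

Definition closed_downS (a : seq nat) (P : {set {set vtx a}}) : Prop :=
  forall j k k' : 'I_(ncols a), cs_pair j k \in P -> k' <= k -> cs_pair j k' \in P.

Lemma closed_down_CS_part (a : seq nat) (P : {set {set vtx a}}) :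
  closed_downC P -> closed_downS P -> closed_down (CS_part P).
Proof.
move=> downC downS p q p' q'; rewrite !inE => /andP[pqP _] p'p q'q.
apply/andP; split; first exact: downS (downC _ _ _ pqP p'p) q'q.
by apply/existsP; exists p'; apply/existsP; exists q'.
Qed.

Section Shift.
Variable a : seq nat.
Hypothesis Ya : young a.
Local Notation n := (ncols a).
Local Notation m := (nrows a).
Local Notation V := (vtx a).

Lemma row_len_le_ncols (i : 'I_m) : nth 0 a i <= n.
Proof.
have a_gt0 : 0 < size a by apply: leq_ltn_trans (ltn_ord i).
rewrite /ncols -nth0.
by apply: (sorted_leq_nth (rev_trans leq_trans) leqnn) => //; rewrite inE.
Qed.

Definition cols_between lo hi : {set 'I_n} := [set j : 'I_n | lo <= j < hi].

Lemma card_cols_between lo hi : hi <= n -> #|cols_between lo hi| = hi - lo.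
Proof.
move=> hi_n; rewrite -sum1_card.
rewrite (eq_bigl (fun j : 'I_n => (lo <= j) && (j < hi))) => [|j]; last by rewrite inE.
rewrite /= -(big_ord_widen_cond n (fun i => lo <= i) (fun _ => 1) hi_n).
have <- : \sum_(lo <= i < hi) 1 = \sum_(i < hi | lo <= i) 1 by rewrite big_geq_mkord.
by rewrite sum_nat_const_nat muln1.
Qed.

Variable P : {set {set V}}.

Definition col_nbrs (v : V) : {set 'I_n} := [set j | [set cv j; v] \in P].

Definition shift_src (v : V) : {set 'I_n} :=
  match v with
  | inl i => col_nbrs v :&: cols_between 0 (nth 0 a i)
  | inr (inl _) => set0
  | inr (inr _) => col_nbrs v
  end.

Definition shift_dst (v : V) : {set 'I_n} :=
  match v with
  | inl i => cols_between (nth 0 a i - #|shift_src v|) (nth 0 a i)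
  | inr (inl _) => set0
  | inr (inr _) => cols_between 0 #|shift_src v|
  end.

Definition shift_perm (v : V) : {perm 'I_n} := perm_onto (shift_src v) (shift_dst v).

Definition shift : {set {set V}} := relabel shift_perm @: P.

Lemma card_shift : #|shift| = #|P|.
Proof. by rewrite card_imset //; apply: relabel_inj. Qed.

Lemma card_shift_src v : #|shift_src v| = #|shift_dst v|.
Proof.
case: v => [i|[j|k]] /=; [|by rewrite cards0|].
  have src_le : #|col_nbrs (inl i) :&: cols_between 0 (nth 0 a i)| <= nth 0 a i.
    rewrite -[X in _ <= X]subn0 -card_cols_between ?row_len_le_ncols //.
    exact/subset_leq_card/subsetIr.
  by rewrite card_cols_between ?row_len_le_ncols // subKn.
by rewrite card_cols_between ?subn0 // -[X in _ <= X]card_ord max_card.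
Qed.

Lemma shift_dst_pair v j : ~~ is_col v -> j \in shift_dst v -> [set cv j; v] \in shift.
Proof.
move=> vC; have src_nbrs : shift_src v \subset col_nbrs v.
  by case: v vC => [i|[j'|k]] //= _; rewrite ?subsetIl.
rewrite (mem_perm_onto _ (card_shift_src v)) -{2}(permKV (shift_perm v) j).
by rewrite mem_relabel_pair // => /(subsetP src_nbrs); rewrite inE.
Qed.

Lemma mem_shift_cs j k : (cs_pair j k \in shift) = (j < #|col_nbrs (sv k)|).
Proof.
rewrite /cs_pair -{1}(permKV (shift_perm (sv k)) j) mem_relabel_pair //.
transitivity ((shift_perm (sv k))^-1%g j \in shift_src (sv k)); first by rewrite inE.
by rewrite -mem_perm_onto ?card_shift_src //= inE.
Qed.

Lemma shift_closed_downC : closed_downC shift.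
Proof. by move=> j j' k; rewrite !mem_shift_cs => jk j'j; apply: leq_ltn_trans j'j jk. Qed.

Lemma shift_closed_downS : closed_downS P -> closed_downS shift.
Proof.
move=> downS j k k'; rewrite !mem_shift_cs => jk k'k; apply: leq_trans jk _.
by apply/subset_leq_card/subsetP => j'; rewrite !inE => j'k; apply: downS j'k k'k.
Qed.

Hypothesis coverP : two_cover P.

Lemma row_len_le_shift_src i k : [set rv i; sv k] \notin P -> k < nth 0 a i ->
  nth 0 a i <= #|shift_src (rv i)| + #|shift_src (sv k)|.
Proof.
have [P2 Pcov] := coverP; move=> rsN ki.
rewrite -[X in X <= _]subn0 -card_cols_between ?row_len_le_ncols //.
apply: leq_trans (leq_card_setU _ _); apply/subset_leq_card/subsetP => j.
rewrite inE => /andP[_ ji]; have [e eP e_sub] := Pcov i j k ji ki.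
case: (card2_subset_set3 (P2 e eP) e_sub) => e_eq; rewrite e_eq in eP.
- by rewrite in_setU /= !inE (setUC [set cv j]) eP ji.
- by rewrite eP in rsN.
- by rewrite in_setU /= !inE eP orbT.
Qed.

Lemma shift_cover : two_cover shift.
Proof.
have [P2 Pcov] := coverP; split.
  by move=> _ /imsetP[e eP ->]; rewrite card_relabel P2.
move=> i j k ji ki.
have [rsP|rsN] := boolP ([set rv i; sv k] \in P).
  exists [set rv i; sv k]; last by apply/subsetP => x; rewrite !inE => /orP[]->; rewrite ?orbT.
  have noncols_rs : noncols [set rv i; sv k] = [set rv i; sv k].
    by apply/setP => x; rewrite !inE; case: eqP => [->|_] //; case: eqP => [->|_].
  apply/imsetP; exists [set rv i; sv k]; rewrite // relabel_id // noncols_rs => v.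
  by apply/negP => /eqP/(congr1 (fun A : {set V} => #|A|)); rewrite cards2 cards1.
have row_le := row_len_le_shift_src rsN ki.
have [js|sj] := ltnP j #|shift_src (sv k)|.
  exists [set cv j; sv k]; first by apply: shift_dst_pair; rewrite //= inE.
  by apply/subsetP => x; rewrite !inE => /orP[]->; rewrite ?orbT.
exists [set cv j; rv i].
  by apply: shift_dst_pair; move: row_le sj; rewrite //= inE ji andbT; lia.
by apply/subsetP => x; rewrite !inE => /orP[]->; rewrite ?orbT.
Qed.

End Shift.

Section Swap.
Variable a : seq nat.
Local Notation V := (vtx a).

Definition swap_vtx (x : V) : V :=
  match x with inl i => inl i | inr (inl j) => inr (inr j) | inr (inr k) => inr (inl k) end.

Lemma swap_vtxK : involutive swap_vtx. Proof. by case=> [x|[x|x]]. Qed.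

Definition swap (P : {set {set V}}) : {set {set V}} :=
  [set swap_vtx @: e | e : {set V} in P].

Lemma mem_swap (P : {set {set V}}) (e : {set V}) : (swap_vtx @: e \in swap P) = (e \in P).
Proof. by rewrite mem_imset //; apply/imset_inj/inv_inj/swap_vtxK. Qed.

Lemma card_swap (P : {set {set V}}) : #|swap P| = #|P|.
Proof. by rewrite card_imset //; apply/imset_inj/inv_inj/swap_vtxK. Qed.

Lemma swap_hedge i j k : swap_vtx @: hedge i k j = hedge i j k.
Proof.
by rewrite /hedge !(imsetU, imsetU1, imset_set1); apply/setP => x; rewrite !inE orbAC.
Qed.

Lemma swap_cs_pair j k : swap_vtx @: cs_pair k j = cs_pair j k.
Proof. by rewrite /cs_pair imsetU1 imset_set1 /= setUC. Qed.

Lemma swap_cover (P : {set {set V}}) : two_cover P -> two_cover (swap P).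
Proof.
move=> [P2 Pcov]; split.
  by move=> _ /imsetP[e eP ->]; rewrite card_imset ?P2 //; apply/inv_inj/swap_vtxK.
move=> i j k ji ki; have [e eP e_sub] := Pcov i k j ki ji.
by exists (swap_vtx @: e); rewrite ?mem_swap // -swap_hedge imsetS.
Qed.

Lemma swap_closed_downS (P : {set {set V}}) : closed_downC P -> closed_downS (swap P).
Proof.
move=> downC j k k'; rewrite -(swap_cs_pair j k) -(swap_cs_pair j k') !mem_swap.
exact: downC.
Qed.

End Swap.

Theorem lemma5 (a : seq nat) (Ya : young a) (P : {set {set vtx a}}) :
  two_cover P ->
  exists P' : {set {set vtx a}},
    [/\ two_cover P', #|P'| = #|P| & closed_down (CS_part P')].
Proof.
move=> coverP; exists (shift (swap (shift P))); split.
- exact/shift_cover/swap_cover/shift_cover.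
- by rewrite !card_shift card_swap card_shift.
- apply: closed_down_CS_part; first exact: shift_closed_downC.
  exact/shift_closed_downS/swap_closed_downS/shift_closed_downC.
Qed.
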